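(* Let $U$ be a finite nonempty set, $R$ an equivalence relation on $U$, and $M(R)$ the support matroid induced by $R$. For every $X\subseteq U$, $X$ is a closed set of $M(R)$ if and only if $R^{*}(X)=R_{*}(X)$.
   Context: For $x\in U$, $RN(x)=\{y\in U\mid xRy\}$; $R_{*}(X)=\{x\in U\mid RN(x)\subseteq X\}$ and $R^{*}(X)=\{x\in U\mid RN(x)\cap X\neq\emptyset\}$. Let $\mathbf{S}(R)=\{X\subseteq U\mid R^{*}(X)=U\}$. The support matroid $M(R)=(U,\mathbf{I}(R))$ is the matroid on $U$ whose independent sets $\mathbf{I}(R)$ are the subsets of inclusion-minimal members of $\mathbf{S}(R)$. For a matroid $(U,\mathbf{I})$, the rank is $r(X)=\max\{|I|\mid I\subseteq X, I\in\mathbf{I}\}$, the closure is $cl(X)=\{e\in U\mid r(X)=r(X\cup\{e\})\}$, and $X$ is closed if $cl(X)=X$. *)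

From mathcomp Require Import all_boot.
Set Implicit Arguments. Unset Strict Implicit. Unset Printing Implicit Defensive.

Section Support.
Variables (U : finType) (R : rel U).

Definition RN (x : U) : {set U} := [set y | R x y].
Definition lowerA (X : {set U}) : {set U} := [set x | RN x \subset X].
Definition upperA (X : {set U}) : {set U} := [set x | RN x :&: X != set0].
Definition supports : {set {set U}} := [set X | upperA X == [set: U]].
Definition indep (I : {set U}) : bool :=
  [exists Y : {set U}, minset (fun Z : {set U} => Z \in supports) Y && (I \subset Y)].
Definition mrank (X : {set U}) : nat :=
  \max_(I : {set U} | indep I && (I \subset X)) #|I|.
Definition mcl (X : {set U}) : {set U} := [set e | mrank X == mrank (e |: X)].
Definition mclosed (X : {set U}) : bool := mcl X == X.

End Support.

From mathcomp Require Import all_boot.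

(** For an equivalence relation the independent sets of [M(R)] are the
    partial transversals of the partition into classes (the minimal supports
    being exactly the full transversals), so [M(R)] is a partition matroid
    whose rank counts the classes met.  Hence adding [e] to [X] raises the
    rank iff the class of [e] misses [X], i.e. [cl(X) = R^*(X)].  Since
    [R_*(X) ⊆ X ⊆ R^*(X)] and a set with [R^*(X) = X] is a union of classes,
    [X] is closed iff [R^*(X) = R_*(X)]. *)

Set Implicit Arguments.
Unset Strict Implicit.
Unset Printing Implicit Defensive.

Section SupportMatroid.
Variables (U : finType) (R : rel U).

Definition partial_transversal (I : {set U}) :=
  {in I &, forall x y, R x y -> x = y}.

Lemma upperAP (X : {set U}) x :
  reflect (exists2 y, y \in X & R x y) (x \in upperA R X).
Proof.
rewrite inE; apply: (iffP (set0Pn _)).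
  by case=> y; rewrite !inE => /andP[Rxy Xy]; exists y.
by case=> y Xy Rxy; exists y; rewrite !inE Rxy.
Qed.

Lemma supportsP (Y : {set U}) :
  reflect (forall u, exists2 y, y \in Y & R u y) (Y \in supports R).
Proof.
rewrite inE; apply: (iffP eqP) => [YU u|YU].
  by apply/upperAP; rewrite YU in_setT.
by apply/setP=> u; rewrite in_setT; apply/upperAP.
Qed.

Lemma partial_transversalS (I J : {set U}) :
  J \subset I -> partial_transversal I -> partial_transversal J.
Proof. by move=> sJI ptI x y Jx Jy; apply: ptI; apply: (subsetP sJI). Qed.

Lemma partial_transversal_setU1 (I : {set U}) e :
  partial_transversal I -> {in I, forall y, R e y || R y e -> y = e} ->
  partial_transversal (e |: I).
Proof.
move=> ptI eI x y; rewrite !inE.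
case/predU1P=> [->|Ix] /predU1P[->|Iy] Rxy //.
- by rewrite (eI y) // Rxy.
- by rewrite (eI x) // Rxy orbT.
- exact: ptI.
Qed.

Lemma mrank_ge (X I : {set U}) :
  indep R I -> I \subset X -> #|I| <= mrank R X.
Proof. by move=> iI sIX; apply: leq_bigmax_cond; rewrite iI. Qed.

Lemma mrank_mono (X Y : {set U}) : X \subset Y -> mrank R X <= mrank R Y.
Proof.
move=> sXY; apply/bigmax_leqP => I /andP[iI sIX].
exact: mrank_ge (subset_trans sIX sXY).
Qed.

Lemma lowerA_sub (X : {set U}) : reflexive R -> lowerA R X \subset X.
Proof.
by move=> Rrefl; apply/subsetP=> x; rewrite inE => /subsetP; apply; rewrite inE.
Qed.

Lemma sub_upperA (X : {set U}) : reflexive R -> X \subset upperA R X.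
Proof. by move=> Rrefl; apply/subsetP=> x Xx; apply/upperAP; exists x. Qed.

Hypotheses (Rrefl : reflexive R) (Rsym : symmetric R) (Rtrans : transitive R).

Lemma minset_supports_partial_transversal (Y : {set U}) :
  minset (mem (supports R)) Y -> partial_transversal Y.
Proof.
case/minsetP=> /supportsP SY minY x y Yx Yy Rxy; apply/eqP/negPn/negP=> nxy.
suff : Y :\ y = Y by move/setP/(_ y); rewrite !inE eqxx Yy.
apply: minY (subsetDl _ _); apply/supportsP=> u.
have [z Yz Ruz] := SY u.
have [ezy|nzy] := eqVneq z y; last by exists z; rewrite // !inE nzy.
exists x; first by rewrite !inE nxy.
by apply: Rtrans Ruz _; rewrite ezy Rsym.
Qed.

Lemma partial_transversal_minset_supports (Y : {set U}) :
  Y \in supports R -> partial_transversal Y -> minset (mem (supports R)) Y.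
Proof.
move=> SY ptY; apply/minsetP; split=> // B /supportsP SB sBY.
apply/eqP; rewrite eqEsubset sBY; apply/subsetP=> y Yy.
by have [z Bz Ryz] := SB y; rewrite (ptY y z Yy (subsetP sBY z Bz) Ryz).
Qed.

Definition class_rep x := odflt x [pick y | R x y].

Lemma class_repR x : R x (class_rep x).
Proof. by rewrite /class_rep; case: pickP => [y //|/(_ x)]; rewrite Rrefl. Qed.

Lemma class_rep_eq x y : R x y -> class_rep x = class_rep y.
Proof.
move=> Rxy; rewrite /class_rep (@eq_pick _ (R x) (R y)).
  by case: pickP => [//|/(_ y)]; rewrite Rrefl.
by move=> z; apply/idP/idP; apply: Rtrans; rewrite // Rsym.
Qed.

(* A partial transversal is completed by the representatives of the classes it misses. *)
Lemma partial_transversal_extend (I : {set U}) :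
  partial_transversal I ->
  exists2 Y, Y \in supports R /\ partial_transversal Y & I \subset Y.
Proof.
move=> ptI; pose missI x := RN R x :&: I == set0.
pose Y := I :|: [set x | missI x && (class_rep x == x)].
have missIP x y : missI x -> y \in I -> ~~ R x y.
  by move=> /eqP/setP/(_ y); rewrite !inE => dxI Iy; apply/negP=> Rxy; rewrite Rxy Iy in dxI.
exists Y; last exact: subsetUl; split.
  apply/supportsP=> u; have [mu|/set0Pn[y]] := boolP (missI u); last first.
    by rewrite !inE => /andP[Ruy Iy]; exists y; rewrite ?inE ?Iy.
  exists (class_rep u); last exact: class_repR.
  rewrite !inE -(class_rep_eq (class_repR u)) eqxx andbT; apply/orP; right.
  apply/eqP/setP=> z; rewrite !inE; apply/negP=> /andP[Rrz Iz].
  by move: (missIP u z mu Iz); rewrite (Rtrans (class_repR u) Rrz).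
move=> x y; rewrite !inE.
case/orP=> [Ix|/andP[mx /eqP rx]] /orP[Iy|/andP[my /eqP ry]] Rxy.
- exact: ptI.
- by move: (missIP y x my Ix); rewrite Rsym Rxy.
- by move: (missIP x y mx Iy); rewrite Rxy.
- by rewrite -rx -ry; apply: class_rep_eq.
Qed.

Lemma indepP (I : {set U}) : reflect (partial_transversal I) (indep R I).
Proof.
apply: (iffP existsP) => [[Y /andP[/minset_supports_partial_transversal ptY sIY]]|].
  exact: partial_transversalS ptY.
case/partial_transversal_extend=> Y [SY ptY] sIY.
by exists Y; rewrite sIY andbT; apply: partial_transversal_minset_supports.
Qed.

Lemma mrank_witness (X : {set U}) :
  {I | indep R I && (I \subset X) & mrank R X = #|I|}.
Proof.
pose A := [pred I : {set U} | indep R I && (I \subset X)].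
have A0 : 0 < #|A|.
  apply/card_gt0P; exists set0.
  by rewrite inE sub0set andbT; apply/indepP=> x y; rewrite inE.
by have [I AI rk] := eq_bigmax_cond (fun I : {set U} => #|I|) A0; exists I.
Qed.

Lemma mrank_setU1_upperA (X : {set U}) e :
  e \in upperA R X -> mrank R (e |: X) = mrank R X.
Proof.
case/upperAP=> x Xx Rex; apply/eqP.
rewrite eqn_leq [mrank R X <= _]mrank_mono ?subsetUr // andbT.
have [Xe|nXe] := boolP (e \in X); first by rewrite (setUidPr _) ?sub1set.
apply/bigmax_leqP=> I /andP[/indepP ptI sIeX].
have [Ie|nIe] := boolP (e \in I); last first.
  apply: mrank_ge; first exact/indepP.
  apply/subsetP=> z Iz; move: (subsetP sIeX z Iz); rewrite !inE.
  by case/orP=> [/eqP ze|//]; rewrite -ze Iz in nIe.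
(* exchange e for its class-mate x *)
have nIx : x \notin I by apply: contra nXe => Ix; rewrite (ptI e x Ie Ix Rex).
have ptJ : partial_transversal (x |: I :\ e).
  apply: partial_transversal_setU1 (partial_transversalS (subsetDl _ _) ptI) _.
  move=> y; rewrite !inE => /andP[nye Iy] Rxy.
  suff : R e y by move/(ptI e y Ie Iy)=> eey; rewrite eey eqxx in nye.
  by case/orP: Rxy => [|Ryx]; [apply: Rtrans Rex | apply: Rtrans Rex _; rewrite Rsym].
have -> : #|I| = #|x |: I :\ e|.
  by rewrite cardsU1 !inE negb_and nIx orbT (cardsD1 e I) Ie.
apply: mrank_ge; first exact/indepP.
apply/subsetP=> z; rewrite !inE => /predU1P[->//|/andP[nze Iz]].
by move: (subsetP sIeX z Iz); rewrite !inE (negbTE nze).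
Qed.

Lemma mrank_setU1_notin_upperA (X : {set U}) e :
  e \notin upperA R X -> mrank R X < mrank R (e |: X).
Proof.
move=> nUe.
have [I /andP[/indepP ptI sIX] ->] := mrank_witness X.
have eI : e \notin I.
  by apply: contra nUe => Ie; apply/upperAP; exists e; rewrite ?(subsetP sIX).
have -> : #|I|.+1 = #|e |: I| by rewrite cardsU1 eI.
apply: mrank_ge; last exact: setUS.
apply/indepP/partial_transversal_setU1=> // y Iy Rey.
case/negP: nUe; apply/upperAP; exists y; first exact: (subsetP sIX).
by case/orP: Rey; rewrite // Rsym.
Qed.

Lemma mcl_upperA (X : {set U}) : mcl R X = upperA R X.
Proof.
apply/setP=> e; rewrite inE.
have [Ue|nUe] := boolP (e \in upperA R X); first by rewrite mrank_setU1_upperA ?eqxx.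
by rewrite ltn_eqF ?mrank_setU1_notin_upperA.
Qed.

Lemma upperA_lowerA_eq (X : {set U}) :
  (upperA R X == lowerA R X) = (upperA R X == X).
Proof.
apply/eqP/eqP=> [ul|uX].
  by apply/eqP; rewrite eqEsubset ul lowerA_sub //= -ul sub_upperA.
apply/eqP; rewrite eqEsubset uX lowerA_sub //= andbT.
apply/subsetP=> x Xx; rewrite inE; apply/subsetP=> y; rewrite inE => Rxy.
by rewrite -uX; apply/upperAP; exists x; rewrite // Rsym.
Qed.

End SupportMatroid.

Theorem corollary3 (U : finType) (u0 : U) (R : rel U)
  (Rrefl : reflexive R) (Rsym : symmetric R) (Rtrans : transitive R)
  (X : {set U}) :
  mclosed R X <-> upperA R X = lowerA R X.
Proof.
rewrite /mclosed mcl_upperA // -upperA_lowerA_eq //.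
by split=> /eqP.
Qed.
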